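(* Let $P,Q$ be probability measures on $(\mathcal X,\mathcal F)$ with $P\ll Q$, let $\psi$ be an Orlicz function, and let $E\in\mathcal F$. Then for every $\gamma\in\mathbb R$, $$P(E)\le \gamma\,Q(E)+\frac{1}{\psi^{-1}(1/Q(E))}\cdot\Big\Vert\Big[\frac{\mathrm dP}{\mathrm dQ}-\gamma\Big]_+\Big\Vert^{A,Q}_{\psi^\star}.$$
   Context: An Orlicz function is a convex $\psi:[0,\infty)\to[0,\infty]$ with $\psi(0)=0$ that is not identically $0$ or identically $\infty$ on $(0,\infty)$. Its conjugate is $\psi^\star(t):=\sup_{\lambda>0}(\lambda t-\psi(\lambda))$, and its generalized inverse is $\psi^{-1}(s):=\inf\{t\ge0:\psi(t)\ge s\}$ for $s\ge0$, with conventions $1/0=\infty$, $\psi^{-1}(\infty)=\infty$, $1/\infty=0$. For a probability measure $\mu$ and measurable $U$, the Luxemburg norm is $\Vert U\Vert^\mu_\psi:=\inf\{\sigma>0:\mathbf E_\mu[\psi(|U|/\sigma)]\le1\}$ and the Amemiya norm is $\Vert U\Vert^{A,\mu}_\psi:=\inf\{(\mathbf E_\mu[\psi(t|U|)]+1)/t:\ t>0\}$. $[x]_+:=\max\{x,0\}$. *)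

From HB Require Import structures.
From mathcomp Require Import all_boot all_order all_algebra.
From mathcomp Require Import all_classical all_reals all_analysis.
Set Implicit Arguments. Unset Strict Implicit. Unset Printing Implicit Defensive.
Import Order.TTheory GRing.Theory Num.Theory.
Local Open Scope classical_set_scope.
Local Open Scope ring_scope.
Local Open Scope ereal_scope.

Section orlicz.
Variable R : realType.

(* Orlicz function psi : [0,oo) -> [0,oo]; only values on [0,oo) matter. *)
Definition orlicz (psi : R -> \bar R) : Prop :=
  [/\ psi 0%R = 0,
      (forall x : R, (0 <= x)%R -> 0 <= psi x),
      (forall x y t : R, (0 <= x)%R -> (0 <= y)%R -> (0 <= t <= 1)%R ->
         psi (t * x + (1 - t) * y)%R <= t%:E * psi x + (1 - t)%:E * psi y),
      (exists x : R, (0 < x)%R /\ psi x != 0) &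
      (exists x : R, (0 < x)%R /\ psi x != +oo)].

Definition orlicz_conj (psi : R -> \bar R) (t : R) : \bar R :=
  ereal_sup [set (l * t)%:E - psi l | l in [set l : R | (0 < l)%R]].

Definition orlicz_inv (psi : R -> \bar R) (s : \bar R) : \bar R :=
  if s == +oo then +oo
  else ereal_inf [set t%:E | t in [set t : R | (0 <= t)%R /\ s <= psi t]].

Definition erecip (x : \bar R) : \bar R :=
  if x == 0 then +oo else if x == +oo then 0 else ((fine x)^-1)%:E.

Definition amemiya_norm d (T : measurableType d) (mu : set T -> \bar R)
    (phi : R -> \bar R) (U : T -> R) : \bar R :=
  ereal_inf [set (\int[mu]_x phi (t * `|U x|)%R + 1) * (t^-1)%:E
            | t in [set t : R | (0 < t)%R]].

End orlicz.

(** Write g := [dP/dQ - gamma]_+. Then P(E) = int_E dP/dQ dQ <= gamma Q(E) + int_E g dQ.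
    For 0 < s < psi^{-1}(1/Q(E)) we have psi(s) Q(E) <= 1, so integrating Young's
    inequality s t g <= psi(s) + psi^*(t g) over E gives
    s int_E g dQ <= (E_Q[psi^*(t g)] + 1) / t for every t > 0, i.e. s int_E g dQ is below
    the Amemiya norm of g; letting s increase to psi^{-1}(1/Q(E)) concludes. *)
From HB Require Import structures.
From mathcomp Require Import all_boot all_order all_algebra.
From mathcomp Require Import all_classical all_reals all_analysis.
From mathcomp Require Import lra.
From mathcomp Require Import measurable_realfun unstable.
Set Implicit Arguments. Unset Strict Implicit. Unset Printing Implicit Defensive.
Import Order.TTheory GRing.Theory Num.Theory.
Local Open Scope classical_set_scope.
Local Open Scope ring_scope.
Local Open Scope ereal_scope.

Section orlicz_function.
Variables (R : realType) (psi : R -> \bar R).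

Lemma orlicz_inv_le y s : (0 <= s)%R -> y%:E <= psi s -> orlicz_inv psi y%:E <= s%:E.
Proof. by move=> s0 ys; rewrite /orlicz_inv /=; apply: ereal_inf_lbound; exists s. Qed.

Hypothesis psi_orlicz : orlicz psi.

Lemma orlicz_ge0 x : (0 <= x)%R -> 0 <= psi x.
Proof. by case: psi_orlicz => _ h _ _ _; apply: h. Qed.

Lemma orlicz_scale_le x l :
  (0 <= x)%R -> (0 <= l <= 1)%R -> psi (l * x)%R <= l%:E * psi x.
Proof.
move=> x0 l01; case: psi_orlicz => psi0 _ psi_cvx _ _.
have := psi_cvx x 0%R l x0 (lexx _) l01.
by rewrite mulr0 addr0 psi0 mule0 adde0.
Qed.

Lemma le_orlicz s t : (0 <= s)%R -> (s <= t)%R -> psi s <= psi t.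
Proof.
move=> s0 st; have t0 : (0 <= t)%R by apply: le_trans st.
have [t_eq0|tn0] := eqVneq t 0%R.
  by rewrite t_eq0 in st *; have -> : s = 0%R by apply/eqP; rewrite eq_le s0 st.
have tp : (0 < t)%R by rewrite lt_neqAle eq_sym tn0 t0.
rewrite -(divfK tn0 s); apply: le_trans (orlicz_scale_le t0 _) _.
  by rewrite divr_ge0 //= ler_pdivrMr // mul1r.
by apply: gee_pMl; rewrite ?orlicz_ge0 // lee_fin ler_pdivrMr // mul1r.
Qed.

Lemma orlicz_small e : (0 < e)%R -> exists2 l, (0 < l)%R & psi l <= e%:E.
Proof.
move=> e0; case: psi_orlicz => _ _ _ _ [x [x0 psix_fin]].
move: psix_fin (orlicz_ge0 (ltW x0)).
case Ex : (psi x) => [a| |] //= _; rewrite lee_fin => a0.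
have ae : (0 < a + e)%R by lra.
exists (e / (a + e) * x)%R; first by rewrite mulr_gt0 // divr_gt0.
apply: le_trans (orlicz_scale_le (ltW x0) _) _.
  by rewrite divr_ge0 ?(ltW e0) ?(ltW ae) //= ler_pdivrMr // mul1r; lra.
by rewrite Ex -EFinM lee_fin mulrAC ler_pdivrMr // ler_pM2l //; lra.
Qed.

Lemma orlicz_unbounded M : exists2 t, (0 <= t)%R & M%:E <= psi t.
Proof.
case: psi_orlicz => _ _ _ [x [x0 psix_neq0]] _.
move: psix_neq0 (orlicz_ge0 (ltW x0)).
case Ex : (psi x) => [b| |] //= bn0; last by exists x; [exact: ltW | rewrite Ex leey].
rewrite lee_fin => b0.
have bp : (0 < b)%R by rewrite lt_neqAle b0 andbT; apply: contraNneq bn0 => <-.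
pose k := (`|M| / b + 1)%R.
have k1 : (1 <= k)%R by rewrite /k lerDr divr_ge0 // ltW.
have kp : (0 < k)%R by apply: lt_le_trans k1.
have kx0 : (0 <= k * x)%R by rewrite mulr_ge0 // ltW.
exists (k * x)%R => //.
have := @orlicz_scale_le (k * x)%R (k^-1)%R kx0.
rewrite mulrA mulVf ?gt_eqF // mul1r Ex invr_ge0 (ltW kp) invf_le1 // k1 => /(_ isT).
case: (psi (k * x)%R) (orlicz_ge0 kx0) => [p _| _ _|//]; last by rewrite leey.
rewrite -EFinM !lee_fin mulrC ler_pdivlMr // => /(le_trans _); apply.
rewrite /k mulrDr mulr1 mulrCA mulfV ?gt_eqF // mulr1.
by have := ler_norm M; lra.
Qed.

Lemma orlicz_conj_ge0 u : (0 <= u)%R -> 0 <= orlicz_conj psi u.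
Proof.
move=> u0; apply/lee_addgt0Pr => e e0.
have [l l0 psil_le] := orlicz_small e0.
have : (l * u)%:E - psi l <= orlicz_conj psi u by apply: ereal_sup_ubound; exists l.
case: (psi l) psil_le (orlicz_ge0 (ltW l0)) => [p pe p0| //|//].
rewrite !lee_fin in pe p0.
case: (orlicz_conj psi u) => [c||]; rewrite ?leey ?leeNy_eq //.
have lu0 : (0 <= l * u)%R by rewrite mulr_ge0 // ltW.
by rewrite -EFinD !lee_fin; lra.
Qed.

(* Young's inequality s u <= psi s + psi^* u, with a measurable left-hand side *)
Lemma orlicz_conj_ge_pos s u p : (0 < s)%R -> (0 <= u)%R -> psi s = p%:E ->
  (Num.max (s * u - p) 0)%:E <= orlicz_conj psi u.
Proof.
move=> s0 u0 psis; case: (leP (s * u - p)%R 0%R) => _; first exact: orlicz_conj_ge0.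
by rewrite EFinB -psis; apply: ereal_sup_ubound; exists s.
Qed.

Lemma orlicz_lt_inv y s : (0 <= s)%R -> s%:E < orlicz_inv psi y%:E ->
  exists2 p, psi s = p%:E & (p < y)%R.
Proof.
move=> s0 s_lt; have : psi s < y%:E.
  by move: s_lt; apply: contraTT; rewrite -!leNgt; exact: orlicz_inv_le.
by case: (psi s) (orlicz_ge0 s0) => [p _ | //|//]; rewrite lte_fin; exists p.
Qed.

Lemma orlicz_inv_gt0 y : (0 < y)%R -> exists2 c, (0 < c)%R & orlicz_inv psi y%:E = c%:E.
Proof.
move=> y0; rewrite /orlicz_inv /=.
set S := [set _%:E | _ in _].
have [s0 s0_gt0 psis0] : exists2 s0, (0 < s0)%R & psi s0 < y%:E.
  have [l l0 psil] := orlicz_small (divr_gt0 y0 (ltr0n R 2)).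
  by exists l => //; apply: le_lt_trans psil _; rewrite lte_fin; lra.
have s0_le : s0%:E <= ereal_inf S.
  apply: le_ereal_inf_tmp => _ [t [t0 yt] <-]; rewrite lee_fin leNgt.
  apply/negP => ts0.
  by have := lt_le_trans (le_lt_trans (le_orlicz t0 (ltW ts0)) psis0) yt; rewrite ltxx.
have [t t0 yt] := orlicz_unbounded y.
have : ereal_inf S <= t%:E by apply: ereal_inf_lbound; exists t.
move: s0_le; case: (ereal_inf S) => [c| |] //= s0c _.
by exists c => //; apply: lt_le_trans s0_gt0 _; rewrite -lee_fin.
Qed.

End orlicz_function.

Lemma erecip0 (R : realType) : erecip (0 : \bar R) = +oo.
Proof. by rewrite /erecip eqxx. Qed.

Lemma erecipy (R : realType) : erecip (+oo : \bar R) = 0.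
Proof. by []. Qed.

Lemma erecipr (R : realType) (r : R) : r != 0%R -> erecip r%:E = (r^-1)%:E.
Proof. by move=> r0; rewrite /erecip eqe (negbTE r0). Qed.

Lemma lee_pmul_sup (R : realType) (c : R) (v a : \bar R) : (0 < c)%R -> 0 <= v ->
  (forall s, (0 < s < c)%R -> s%:E * v <= a) -> c%:E * v <= a.
Proof.
move=> c0 v0 sva.
have c20 : (0 < c / 2 < c)%R by apply/andP; split; lra.
have := sva _ c20.
case: v v0 sva => [w| |] //= v0 sva; last first.
  have c2E : 0 < (c / 2)%:E by rewrite lte_fin; lra.
  by rewrite !gt0_muley ?lte_fin.
case: a sva => [a| |] sva; rewrite -?EFinM ?leey ?leeNy_eq // lee_fin => c2wa.
rewrite lee_fin in v0; apply/ler_ltP => z zcw.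
have [z0|z0] := leP z 0%R; first by apply: le_trans z0 _; nra.
have wp : (0 < w)%R by nra.
have := sva (z / w)%R; rewrite -EFinM lee_fin divfK ?gt_eqF //; apply.
by rewrite divr_gt0 //= ltr_pdivrMr // mulrC.
Qed.

Section young_integral.
Context d (T : measurableType d) (R : realType) (mu : {measure set T -> \bar R}).

(* No measurability is required: [orlicz_conj psi] need not be Borel. *)
Lemma ge0_le_integral_setT D (f1 f2 : T -> \bar R) :
  (forall x, D x -> 0 <= f1 x) -> (forall x, D x -> f1 x <= f2 x) ->
  (forall x, 0 <= f2 x) -> \int[mu]_(x in D) f1 x <= \int[mu]_x f2 x.
Proof.
move=> f10 f12 f20; rewrite integral_mkcond.
rewrite (ge0_integralE _ (fun x _ => erestrict_ge0 f10 x)) (ge0_integralE _ (fun x _ => f20 x)).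
apply: ereal_sup_le => _ [h hf <-]; exists h => //= x.
apply: le_trans (hf x) _; rewrite /patch in_setT /=.
by case: ifP => [/set_mem|_]; [exact: f12 | exact: f20].
Qed.

Lemma integral_le_shift E (f : T -> R) (gamma : R) : measurable E ->
  measurable_fun E f -> (forall x, (0 <= f x)%R) -> mu E \is a fin_num ->
  \int[mu]_(x in E) (f x)%:E <=
  gamma%:E * mu E + \int[mu]_(x in E) (Num.max (f x - gamma) 0)%:E.
Proof.
move=> mE mf f0 muE.
have mfE : measurable_fun E (EFin \o f) by exact/measurable_EFinP.
have mgE : measurable_fun E (fun x => (Num.max (f x - gamma) 0)%:E).
  by apply/measurable_EFinP/measurable_funrpos/measurable_funB => //; exact: measurable_cst.
have g0 x : E x -> 0 <= (Num.max (f x - gamma) 0)%:E.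
  by rewrite lee_fin le_max lexx orbT.
have [gamma0|gamma_lt0] := leP 0%R gamma.
  rewrite -integral_cst // -ge0_integralD //.
  apply: ge0_le_integral => //; first by move=> x _; rewrite lee_fin.
    by apply: emeasurable_funD => //; exact: measurable_cst.
  by move=> x _; rewrite /= -EFinD lee_fin -lerBlDl le_max lexx.
have -> : \int[mu]_(x in E) (Num.max (f x - gamma) 0)%:E =
    \int[mu]_(x in E) (f x)%:E + (- gamma)%:E * mu E.
  rewrite -integral_cst // -ge0_integralD // => [|x _|x _]; rewrite /= ?lee_fin //; last lra.
  by apply: eq_integral => x _; rewrite -EFinD max_l //; have := f0 x; lra.
by rewrite addeCA EFinN mulNe subee ?fin_numM // adde0.
Qed.

Variable psi : R -> \bar R.
Hypothesis psi_orlicz : orlicz psi.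

Lemma young_integral_le E (g : T -> R) s t p : measurable E ->
  measurable_fun E g -> (forall x, (0 <= g x)%R) ->
  (0 < s)%R -> (0 < t)%R -> psi s = p%:E ->
  (s * t)%:E * \int[mu]_(x in E) (g x)%:E <=
  \int[mu]_x orlicz_conj psi (t * `|g x|)%R + p%:E * mu E.
Proof.
move=> mE mg g0 s0 t0 psis.
have p0 : (0 <= p)%R by rewrite -lee_fin -psis orlicz_ge0 // ltW.
have st0 : (0 <= s * t)%R by rewrite mulr_ge0 // ltW.
pose h x := Num.max (s * t * g x - p)%R 0%R.
have h0 x : E x -> 0 <= (h x)%:E by rewrite lee_fin le_max lexx orbT.
have mh : measurable_fun E (EFin \o h).
  apply/measurable_EFinP/measurable_funrpos/measurable_funB; last exact: measurable_cst.
  by apply: measurable_funM => //; exact: measurable_cst.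
have gE0 x : E x -> 0 <= (g x)%:E by rewrite lee_fin.
have mgE : measurable_fun E (EFin \o g) by exact/measurable_EFinP.
rewrite -ge0_integralZl_EFin //.
apply: (@le_trans _ _ (\int[mu]_(x in E) ((h x)%:E + p%:E))).
  apply: ge0_le_integral => //.
  - by move=> x _; rewrite -EFinM lee_fin mulr_ge0.
  - by apply: emeasurable_funM => //; exact: measurable_cst.
  - by apply: emeasurable_funD => //; exact: measurable_cst.
  - by move=> x _; rewrite -EFinM -EFinD lee_fin -lerBlDr le_max lexx.
rewrite ge0_integralD //.
rewrite integral_cst // leeD2r //.
apply: ge0_le_integral_setT => [x /h0 //|x _|x].
  rewrite (ger0_norm (g0 x)) /h -mulrA.
  by apply: orlicz_conj_ge_pos; rewrite // mulr_ge0 // ltW.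
by apply: orlicz_conj_ge0 => //; rewrite mulr_ge0 // ltW.
Qed.

Lemma le_amemiya_norm E (g : T -> R) s p : measurable E ->
  measurable_fun E g -> (forall x, (0 <= g x)%R) ->
  (0 < s)%R -> psi s = p%:E -> p%:E * mu E <= 1 ->
  s%:E * \int[mu]_(x in E) (g x)%:E <= amemiya_norm mu (orlicz_conj psi) g.
Proof.
move=> mE mg g0 s0 psis pmuE.
apply: le_ereal_inf_tmp => _ [t t0 <-].
rewrite lee_pdivlMr // muleAC -EFinM.
apply: le_trans (young_integral_le mE mg g0 s0 t0 psis) _.
exact: leeD2l.
Qed.

End young_integral.

(* f is (a version of) the Radon-Nikodym derivative dP/dQ *)
Theorem theorem2 (R : realType) (d : measure_display) (T : measurableType d)
  (P Q : probability T R) (f : T -> R) (psi : R -> \bar R) (E : set T)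
  (gamma : R) :
  P `<< Q ->
  measurable_fun setT f -> (forall x, (0 <= f x)%R) ->
  (forall A, measurable A -> P A = \int[Q]_(x in A) (f x)%:E) ->
  orlicz psi -> measurable E ->
  P E <= gamma%:E * Q E
         + erecip (orlicz_inv psi (erecip (Q E)))
           * amemiya_norm Q (orlicz_conj psi) (fun x => Num.max (f x - gamma) 0)%R.
Proof.
move=> PQ mf f0 Pf psi_orlicz mE.
set g := fun x => Num.max (f x - gamma)%R 0%R.
have mfE : measurable_fun E f by apply: measurable_funS mf.
have mg : measurable_fun E g.
  by apply/measurable_funrpos/measurable_funB => //; exact: measurable_cst.
have g0 x : (0 <= g x)%R by rewrite le_max lexx orbT.
have PE_le : P E <= gamma%:E * Q E + \int[Q]_(x in E) (g x)%:E.
  by rewrite Pf //; apply: integral_le_shift => //; exact: fin_num_measure.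
have [QE0|QEn0] := eqVneq (Q E) 0.
  have PE0 : P E = 0.
    by apply/(measure0_null_setP P mE); apply: PQ; exact/(measure0_null_setP Q mE).
  by rewrite QE0 PE0 erecip0 /orlicz_inv eqxx erecipy mul0e mule0 adde0.
have [q QEq] : exists q, Q E = q%:E by exists (fine (Q E)); rewrite fineK ?fin_num_measure.
have qp : (0 < q)%R by rewrite -lte_fin -QEq lt0e QEn0 measure_ge0.
have qVp : (0 < q^-1)%R by rewrite invr_gt0.
have [c c0 cE] := orlicz_inv_gt0 psi_orlicz qVp.
apply: le_trans PE_le _; rewrite leeD2l // QEq erecipr ?gt_eqF //.
rewrite [X in erecip X]cE erecipr ?gt_eqF // lee_pdivlMl //.
apply: lee_pmul_sup => [//||s /andP[s0 sc]]; first by apply: integral_ge0 => x _; rewrite lee_fin.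
have [|p psis pq] := orlicz_lt_inv psi_orlicz (y := q^-1) (ltW s0).
  by rewrite [orlicz_inv _ _]cE lte_fin.
apply: le_amemiya_norm psis _ => //.
by rewrite -[X in _ * X]/(Q E) QEq -EFinM lee_fin -ler_pdivlMr // div1r ltW.
Qed.
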